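(* Let $c \in (0,1/2]$, $t_1 \in [0,1-2c]$, $t_2 \in [t_1+c,1-c]$, and let $p,q \in (0,1)$ with $p \neq q$. Let $F$, $\Lambda_{p,q}$ and $\gamma_r$ be as described in the context. Then for every $r \in \Lambda_{p,q}$, \[ \left(\int_{F \times F} |x-y|^2 \, d\gamma_r(x,y)\right)^{1/2} \;=\; \frac{t_2-t_1}{1-c}\sqrt{\frac{2c(p-q)^2+(1-c)(p+q-2r)}{1+c}}. \]
   Context: Let $S_1(x)=cx+t_1$ and $S_2(x)=cx+t_2$ on $[0,1]$. Let $F\subseteq[0,1]$ be the unique nonempty compact set with $F=S_1(F)\cup S_2(F)$. For $p\in(0,1)$, $\mu_p$ is the unique Borel probability measure with $\mu_p = p\,\mu_p\circ S_1^{-1} + (1-p)\,\mu_p\circ S_2^{-1}$. On $[0,1]^2$ define $S_{i,j}(x,y)=(S_i(x),S_j(y))$ for $i,j\in\{1,2\}$. Let $\Lambda_{p,q}$ be the open interval $\max\{0,p+q-1\}<r<\min\{p,q\}$. For $r\in\Lambda_{p,q}$, $\gamma_r$ is the unique Borel probability measure on $[0,1]^2$ satisfying $\gamma_r = r\,\gamma_r\circ S_{1,1}^{-1} + (p-r)\,\gamma_r\circ S_{1,2}^{-1} + (q-r)\,\gamma_r\circ S_{2,1}^{-1} + (1-p-q+r)\,\gamma_r\circ S_{2,2}^{-1}$; it is supported on $F\times F$ and is a coupling of $\mu_p$ and $\mu_q$. *)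

From HB Require Import structures.
From mathcomp Require Import all_boot all_order all_algebra.
From mathcomp Require Import all_classical all_reals all_analysis.
Set Implicit Arguments. Unset Strict Implicit. Unset Printing Implicit Defensive.
Import Order.TTheory GRing.Theory Num.Theory.
Import numFieldNormedType.Exports.
Local Open Scope classical_set_scope.
Local Open Scope ring_scope.

Definition simil {R : realType} (c t : R) (x : R) : R := c * x + t.

Definition simil2 {R : realType} (c ti tj : R) (z : R * R) : R * R :=
  (simil c ti z.1, simil c tj z.2).

(* F is the attractor of {S_1, S_2}: a nonempty compact set with
   F = S_1(F) ∪ S_2(F) (such a set is unique by Hutchinson's theorem). *)
Definition is_attractor {R : realType} (c t1 t2 : R) (F : set R) : Prop :=
  compact F /\ F !=set0 /\ F = simil c t1 @` F `|` simil c t2 @` F.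

Definition is_gamma {R : realType} (c t1 t2 p q r : R)
    (gamma : set (R * R) -> \bar R) : Prop :=
  forall A : set (R * R), measurable A ->
    gamma A =
      (r%:E * gamma (simil2 c t1 t1 @^-1` A)
     + (p - r)%:E * gamma (simil2 c t1 t2 @^-1` A)
     + (q - r)%:E * gamma (simil2 c t2 t1 @^-1` A)
     + (1 - p - q + r)%:E * gamma (simil2 c t2 t2 @^-1` A))%E.

From HB Require Import structures.
From mathcomp Require Import all_boot all_order all_algebra.
From mathcomp Require Import all_classical all_reals all_analysis.
From mathcomp Require Import measurable_realfun ring lra.
Import Order.TTheory GRing.Theory Num.Theory.
Import numFieldNormedType.Exports.
Local Open Scope classical_set_scope.
Local Open Scope ring_scope.

(* The self-similarity of gamma_r expresses the integral of a nonnegative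
   function h as the weighted sum of the integrals of h o S_ij.  For h the
   distance of (x, y) to F x F, which the maps S_ij contract by c, this gives
   int h <= c int h, so gamma_r is concentrated on F x F.  For the shifted
   difference u = x - y + 1, which is nonnegative on [0,1]^2 and satisfies
   u o S_ij = c u + (t_i - t_j + 1 - c), it gives two linear equations for the
   first two moments of u; solving them yields the second moment of x - y. *)

Definition set_dist {R : realType} (F : set R) (x : R) : R :=
  inf [set `|x - y| | y in F].

Section set_dist.
Context {R : realType} {F : set R}.

Let dists_lbound x : has_lbound [set `|x - y| | y in F].
Proof. by exists 0 => _ [y _ <-]. Qed.

Hypothesis F0 : F !=set0.

Let dists_neq0 x : [set `|x - y| | y in F] !=set0.
Proof. by case: F0 => y Fy; exists `|x - y|, y. Qed.

Lemma set_dist_ge0 x : 0 <= set_dist F x.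
Proof. by apply: lb_le_inf; [exact: dists_neq0 | move=> _ [y _ <-]]. Qed.

Lemma set_dist_le x {y} : F y -> set_dist F x <= `|x - y|.
Proof. by move=> Fy; apply: ge_inf; [exact: dists_lbound | exists y]. Qed.

Lemma set_dist_lipschitz x x' : set_dist F x <= `|x - x'| + set_dist F x'.
Proof.
rewrite -lerBlDl; apply: lb_le_inf; first exact: dists_neq0.
move=> _ [y Fy <-]; rewrite lerBlDl.
apply: (le_trans (set_dist_le x Fy)).
by rewrite -[x - y](subrKA x') ler_normD.
Qed.

Lemma set_dist_continuous : continuous (set_dist F).
Proof.
move=> x; apply/cvgrPdist_lt => e e0; apply/nbhs_ballP; exists e => //= y xy.
rewrite (le_lt_trans _ xy)// ler_norml.
have := set_dist_lipschitz x y; have := set_dist_lipschitz y x.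
by rewrite distrC => ? ?; apply/andP; split; lra.
Qed.

Lemma measurable_set_dist : measurable_fun setT (set_dist F).
Proof. exact: continuous_measurable_fun set_dist_continuous. Qed.

Lemma set_dist_simil (c t : R) : 0 < c -> simil c t @` F `<=` F ->
  forall x, set_dist F (simil c t x) <= c * set_dist F x.
Proof.
move=> c0 sF x; rewrite -ler_pdivrMl//; apply: lb_le_inf; first exact: dists_neq0.
move=> _ [y Fy <-]; rewrite ler_pdivrMl//.
apply: (le_trans (set_dist_le _ (sF _ (ex_intro2 _ _ y Fy erefl)))).
have -> : simil c t x - simil c t y = c * (x - y) by rewrite /simil; ring.
by rewrite normrM gtr0_norm.
Qed.

Lemma set_dist_eq0 x : closed F -> set_dist F x = 0 -> F x.
Proof.
move=> cF dx; apply: cF => B /nbhs_ballP [e /= e0 Be].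
have [_ [y Fy <-] ylt] := inf_adherent e0 (conj (dists_neq0 x) (dists_lbound x)).
exists y; split => //; apply: Be.
by move: ylt; rewrite -/(set_dist F x) dx add0r.
Qed.

End set_dist.

(* The measure instance on [pushforward m f] needs the measurability of [f], so
   it cannot be inferred and is referred to by its generated name. *)
Notation pushforward_measure :=
  measure_function_pushforward__canonical__measure_function_Measure.

Lemma measurable_simil2 {R : realType} (c a b : R) :
  measurable_fun setT (simil2 c a b).
Proof.
apply: measurable_fun_pair; rewrite /simil.
- by apply: measurable_funD => //; apply: measurable_funM => //;
    exact: measurable_fst.
- by apply: measurable_funD => //; apply: measurable_funM => //;
    exact: measurable_snd.
Qed.

Section is_gamma_integral.
Context {R : realType} {c t1 t2 p q r : R}.
Context {gamma : {measure set (R * R)%type -> \bar R}}.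
Hypotheses (r_ge0 : 0 <= r) (pr_ge0 : 0 <= p - r) (qr_ge0 : 0 <= q - r)
  (pqr_ge0 : 0 <= 1 - p - q + r).
Hypothesis gammaE : is_gamma c t1 t2 p q r gamma.
Local Open Scope ereal_scope.

Let ge0_integral_branch (w : {nonneg R}) ti tj (h : (R * R)%type -> \bar R) :
  measurable_fun setT h -> (forall z, 0 <= h z) ->
  \int[mscale w (pushforward_measure gamma (measurable_simil2 c ti tj))]_z h z =
  w%:num%:E * \int[gamma]_z h (simil2 c ti tj z).
Proof.
move=> mh h0; rewrite ge0_integral_mscale //.
by rewrite ge0_integral_pushforward //; exact: measurable_simil2.
Qed.

Lemma ge0_integral_is_gamma {h : (R * R)%type -> \bar R} :
  measurable_fun setT h -> (forall z, 0 <= h z) ->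
  \int[gamma]_z h z =
    r%:E * \int[gamma]_z h (simil2 c t1 t1 z)
  + (p - r)%:E * \int[gamma]_z h (simil2 c t1 t2 z)
  + (q - r)%:E * \int[gamma]_z h (simil2 c t2 t1 z)
  + (1 - p - q + r)%:E * \int[gamma]_z h (simil2 c t2 t2 z).
Proof.
move=> mh h0.
pose branch (w : {nonneg R}) ti tj :=
  mscale w (pushforward_measure gamma (measurable_simil2 c ti tj)).
rewrite (eq_measure_integral (measure_add
  (measure_add (branch (NngNum r_ge0) t1 t1) (branch (NngNum pr_ge0) t1 t2))
  (measure_add (branch (NngNum qr_ge0) t2 t1) (branch (NngNum pqr_ge0) t2 t2))));
  last first.
  move=> A mA _; rewrite (gammaE A mA) /= /msum !big_ord_recl !big_ord0 /=.
  by rewrite /msum !big_ord_recl !big_ord0 /= /mscale /pushforward !adde0 !addeA.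
by rewrite !ge0_integral_measure_add // !ge0_integral_branch // !addeA.
Qed.

End is_gamma_integral.

Section full_measure.
Context {d} {T : measurableType d} {R : realType}.
Local Open Scope ereal_scope.

Lemma ge0_integral_setC_null {mu : {measure set T -> \bar R}} {D : set T}
    {h : T -> \bar R} : measurable D -> mu (~` D) = 0 ->
  measurable_fun setT h -> (forall z, 0 <= h z) ->
  \int[mu]_z h z = \int[mu]_(z in D) h z.
Proof.
move=> mD D0 mh h0.
rewrite -(setUCr D) ge0_integral_setU //; last 3 first.
- exact: measurableC.
- by rewrite setUCr.
- by rewrite disj_set2E setICr.
rewrite [X in _ + X]null_set_integral ?adde0 //; first exact: measurableC.
exact: measurable_funTS.
Qed.

Context {P : probability T R} {D : set T}.
Hypotheses (mD : measurable D) (PD : P D = 1).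

Lemma bounded_integral_fineK {f : T -> R} {B : R} : measurable_fun D f ->
  (forall z, D z -> (0 <= f z)%R) -> (forall z, D z -> (f z <= B)%R) ->
  \int[P]_(z in D) (f z)%:E = (fine (\int[P]_(z in D) (f z)%:E))%:E.
Proof.
move=> mf f0 fB; rewrite fineK // ge0_fin_numE; last first.
  by apply: integral_ge0 => z Dz; rewrite lee_fin f0.
apply: (@le_lt_trans _ _ B%:E); last exact: ltry.
rewrite -[leRHS]mule1 -PD -integral_cst //.
by apply: ge0_le_integral => //; exact/measurable_EFinP.
Qed.

Lemma ge0_integral_affine2 {f1 f2 : T -> R} {a b e : R} :
  measurable_fun D f1 -> measurable_fun D f2 ->
  (forall z, D z -> (0 <= f1 z)%R) -> (forall z, D z -> (0 <= f2 z)%R) ->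
  (0 <= a)%R -> (0 <= b)%R -> (0 <= e)%R ->
  \int[P]_(z in D) (a * f1 z + b * f2 z + e)%:E =
  a%:E * \int[P]_(z in D) (f1 z)%:E + b%:E * \int[P]_(z in D) (f2 z)%:E + e%:E.
Proof.
move=> m1 m2 f10 f20 a0 b0 e0.
have mf1 : measurable_fun D (EFin \o f1) by exact/measurable_EFinP.
have mf2 : measurable_fun D (EFin \o f2) by exact/measurable_EFinP.
have af1_ge0 z : D z -> 0 <= a%:E * (f1 z)%:E.
  by move=> Dz; rewrite mule_ge0 // lee_fin f10.
have bf2_ge0 z : D z -> 0 <= b%:E * (f2 z)%:E.
  by move=> Dz; rewrite mule_ge0 // lee_fin f20.
have maf1 : measurable_fun D (fun z => a%:E * (f1 z)%:E).
  exact: emeasurable_funM.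
have mbf2 : measurable_fun D (fun z => b%:E * (f2 z)%:E).
  exact: emeasurable_funM.
(* [integral_cst] is stated for the measure underlying [P]. *)
have PD' : (P : {measure set T -> \bar R}) D = 1 := PD.
under eq_integral do rewrite !EFinD !EFinM.
rewrite ge0_integralD //; last 2 first.
- by move=> z Dz; rewrite adde_ge0 ?af1_ge0 ?bf2_ge0.
- exact: emeasurable_funD.
rewrite ge0_integralD // integral_cst // PD' mule1.
by rewrite !ge0_integralZl_EFin // => z Dz; rewrite lee_fin ?f10 ?f20.
Qed.

Lemma ge0_integral_affine {f : T -> R} {a e : R} : measurable_fun D f ->
  (forall z, D z -> (0 <= f z)%R) -> (0 <= a)%R -> (0 <= e)%R ->
  \int[P]_(z in D) (a * f z + e)%:E = a%:E * \int[P]_(z in D) (f z)%:E + e%:E.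
Proof.
move=> mf f0 a0 e0.
transitivity (\int[P]_(z in D) (a * f z + 0 * f z + e)%:E).
  by apply: eq_integral => z _; rewrite mul0r addr0.
by rewrite ge0_integral_affine2 // mul0e adde0.
Qed.

End full_measure.

Definition unit_square (R : realType) : set (R * R)%type := `[0, 1] `*` `[0, 1].

Lemma measurable_unit_square {R : realType} : measurable (unit_square R).
Proof. by apply: measurableX; exact: measurable_itv. Qed.

Lemma unit_squareP {R : realType} (z : (R * R)%type) : unit_square R z ->
  [/\ 0 <= z.1, z.1 <= 1, 0 <= z.2 & z.2 <= 1].
Proof. by case; rewrite /= !in_itv /= => /andP[? ?] /andP[? ?]. Qed.

Lemma probability_unit_squareC {R : realType} {P : probability (R * R)%type R} :
  P (unit_square R) = 1%E -> P (~` unit_square R) = 0%E.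
Proof.
by move=> P1; rewrite probability_setC ?P1 ?subee //; exact: measurable_unit_square.
Qed.

Definition set_dist2 {R : realType} (F : set R) (z : (R * R)%type) : R :=
  set_dist F z.1 + set_dist F z.2.

Section attractor_concentration.
Context {R : realType} {c t1 t2 : R} {F : set R}.
Hypotheses (c_gt0 : 0 < c) (attrF : is_attractor c t1 t2 F).

Let F_neq0 : F !=set0. Proof. by case: attrF => _ []. Qed.

Let simil1_sub : simil c t1 @` F `<=` F.
Proof. by case: attrF => _ [_ FE] x Fx; rewrite FE; left. Qed.

Let simil2_sub : simil c t2 @` F `<=` F.
Proof. by case: attrF => _ [_ FE] x Fx; rewrite FE; right. Qed.

Let set_dist2_ge0 z : 0 <= set_dist2 F z.
Proof. by rewrite addr_ge0 // set_dist_ge0. Qed.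

Let measurable_set_dist2 : measurable_fun setT (set_dist2 F).
Proof.
apply: measurable_funD; apply: measurableT_comp;
  try exact: (measurable_set_dist F_neq0).
- exact: measurable_fst.
- exact: measurable_snd.
Qed.

Let measurable_set_dist2E : measurable_fun setT (fun z => (set_dist2 F z)%:E).
Proof. exact/measurable_EFinP. Qed.

Let integral_set_dist2_simil2_le (mu : {measure set (R * R)%type -> \bar R}) ti tj :
    simil c ti @` F `<=` F -> simil c tj @` F `<=` F ->
  (\int[mu]_z (set_dist2 F (simil2 c ti tj z))%:E <=
   c%:E * \int[mu]_z (set_dist2 F z)%:E)%E.
Proof.
move=> si sj; rewrite -ge0_integralZl_EFin //; last exact: ltW.
under [X in (_ <= X)%E]eq_integral do rewrite -EFinM.
apply: ge0_le_integral => //.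
- by move=> z _; rewrite lee_fin.
- apply/measurable_EFinP; apply: measurableT_comp => //; exact: measurable_simil2.
- by apply/measurable_EFinP; apply: measurable_funM.
- move=> z _; rewrite lee_fin /set_dist2 mulrDr.
  by apply: lerD; apply: (set_dist_simil F_neq0).
- by move=> z _; rewrite lee_fin.
Qed.

Lemma is_gamma_attractor_null {p q r : R} {gamma : probability (R * R)%type R} :
  c < 1 -> 0 <= r -> 0 <= p - r -> 0 <= q - r -> 0 <= 1 - p - q + r ->
  gamma (unit_square R) = 1%E -> is_gamma c t1 t2 p q r gamma ->
  gamma (~` (F `*` F)) = 0%E.
Proof.
move=> c_lt1 w1 w2 w3 w4 gamma1 gammaE.
have [y0 Fy0] := F_neq0.
have dist_bound z : unit_square R z -> set_dist2 F z <= 2 * (1 + `|y0|).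
  case/unit_squareP => z10 z11 z20 z21; rewrite /set_dist2.
  have := set_dist_le z.1 Fy0; have := set_dist_le z.2 Fy0.
  have := ler_normB z.1 y0; have := ler_normB z.2 y0.
  by rewrite (ger0_norm z10) (ger0_norm z20); lra.
have h0 z : (0 <= (set_dist2 F z)%:E)%E by rewrite lee_fin.
have := ge0_integral_setC_null measurable_unit_square
  (probability_unit_squareC gamma1) measurable_set_dist2E h0.
rewrite (bounded_integral_fineK measurable_unit_square gamma1
  (measurable_funTS measurable_set_dist2) (fun z _ => set_dist2_ge0 z) dist_bound).
set x := fine _ => Ix.
have x_ge0 : 0 <= x by rewrite /x fine_ge0 // integral_ge0.
have : (x%:E <= r%:E * (c * x)%:E + (p - r)%:E * (c * x)%:E + (q - r)%:E * (c * x)%:E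
    + (1 - p - q + r)%:E * (c * x)%:E)%E.
  rewrite -[X in (X <= _)%E]Ix (ge0_integral_is_gamma w1 w2 w3 w4 gammaE) //.
  by rewrite EFinM -Ix; repeat apply: leeD; apply: lee_wpmul2l;
    rewrite ?lee_fin //; exact: integral_set_dist2_simil2_le.
rewrite -!EFinM -!EFinD lee_fin => x_le; have x0 : x = 0 by nra.
have : (\int[gamma]_(z in setT) `|(set_dist2 F z)%:E| = 0)%E.
  by under eq_integral do rewrite gee0_abs ?lee_fin //; rewrite Ix x0.
move/(ae_eq_integral_abs gamma measurableT measurable_set_dist2E).
move=> -[N [mN N0 sub]].
have clF : closed F by apply: compact_closed; [exact: Rhausdorff | case: attrF].
apply: (subset_measure0 _ mN _ N0).
  by apply: measurableC; apply: measurableX; exact: closed_measurable.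
move=> z /= notFF; apply: sub => /= /(_ Logic.I) /eqP.
rewrite eqe /set_dist2 => /eqP dz.
have := set_dist_ge0 F_neq0 z.1; have := set_dist_ge0 F_neq0 z.2 => d2 d1.
by apply: notFF; split; apply: (set_dist_eq0 F_neq0 _ clF); lra.
Qed.

End attractor_concentration.

Section second_moment.
Context {R : realType} {c t1 t2 p q r : R} {gamma : probability (R * R)%type R}.
Hypotheses (c_gt0 : 0 < c) (c_lt1 : c < 1) (t12 : t1 <= t2) (t21 : t2 - t1 <= 1 - c).
Hypotheses (r_ge0 : 0 <= r) (pr_ge0 : 0 <= p - r) (qr_ge0 : 0 <= q - r)
  (pqr_ge0 : 0 <= 1 - p - q + r).
Hypotheses (gamma1 : gamma (unit_square R) = 1%E)
  (gammaE : is_gamma c t1 t2 p q r gamma).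

Let branch_shifts_ge0 : [/\ 0 <= t1 - t1 + 1 - c, 0 <= t1 - t2 + 1 - c,
  0 <= t2 - t1 + 1 - c & 0 <= t2 - t2 + 1 - c].
Proof. by move: c_lt1 t12 t21; split; lra. Qed.

Local Open Scope ereal_scope.

Let u (z : (R * R)%type) : R := z.1 - z.2 + 1.

Let measurable_u : measurable_fun setT u.
Proof.
apply: measurable_funD => //; apply: measurable_funB.
- exact: measurable_fst.
- exact: measurable_snd.
Qed.

Let measurable_u2 : measurable_fun setT (fun z => u z ^+ 2)%R.
Proof. exact: measurable_funX. Qed.

Let u_ge0 z : unit_square R z -> (0 <= u z)%R.
Proof. by case/unit_squareP => *; rewrite /u; lra. Qed.

Let u_le2 z : unit_square R z -> (u z <= 2)%R.
Proof. by case/unit_squareP => *; rewrite /u; lra. Qed.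

Let integral_unit_square {h : (R * R)%type -> \bar R} :
  measurable_fun setT h -> (forall z, 0 <= h z) ->
  \int[gamma]_z h z = \int[gamma]_(z in unit_square R) h z.
Proof.
exact: ge0_integral_setC_null measurable_unit_square
  (probability_unit_squareC gamma1).
Qed.

Let m1 := fine (\int[gamma]_(z in unit_square R) (u z)%:E).
Let m2 := fine (\int[gamma]_(z in unit_square R) (u z ^+ 2)%:E).

Let integral_u : \int[gamma]_(z in unit_square R) (u z)%:E = m1%:E.
Proof.
exact: (bounded_integral_fineK measurable_unit_square gamma1
  (measurable_funTS measurable_u) u_ge0 u_le2).
Qed.

Let integral_u2 : \int[gamma]_(z in unit_square R) (u z ^+ 2)%:E = m2%:E.
Proof.
apply: (bounded_integral_fineK measurable_unit_square gamma1 (B := 4%R)).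
- exact: measurable_funTS measurable_u2.
- by move=> z _; rewrite sqr_ge0.
- by move=> z Qz; have := u_ge0 z Qz; have := u_le2 z Qz => *; nra.
Qed.

Let integral_u_simil2 ti tj : (0 <= ti - tj + 1 - c)%R ->
  \int[gamma]_z (`|u (simil2 c ti tj z)|)%:E = (c * m1 + (ti - tj + 1 - c))%:E.
Proof.
set e := (ti - tj + 1 - c)%R => e_ge0.
rewrite integral_unit_square; last 2 first.
- apply/measurable_EFinP; apply: measurableT_comp => //.
  exact: measurableT_comp measurable_u (measurable_simil2 _ _ _).
- by move=> z; rewrite lee_fin.
transitivity (\int[gamma]_(z in unit_square R) (c * u z + e)%:E).
  apply: eq_integral => z /[!inE] Qz; congr EFin.
  have -> : u (simil2 c ti tj z) = (c * u z + e)%R.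
    by rewrite /u /e /simil2 /simil /=; ring.
  by rewrite ger0_norm // addr_ge0 // mulr_ge0 ?u_ge0 // (ltW c_gt0).
by rewrite (ge0_integral_affine measurable_unit_square gamma1
  (measurable_funTS measurable_u) u_ge0 (ltW c_gt0) e_ge0) integral_u.
Qed.

Let integral_u2_simil2 ti tj : (0 <= ti - tj + 1 - c)%R ->
  \int[gamma]_z (u (simil2 c ti tj z) ^+ 2)%:E =
  (c ^+ 2 * m2 + 2 * c * (ti - tj + 1 - c) * m1 + (ti - tj + 1 - c) ^+ 2)%:E.
Proof.
set e := (ti - tj + 1 - c)%R => e_ge0.
rewrite integral_unit_square; last 2 first.
- apply/measurable_EFinP; apply: measurable_funX; apply: measurableT_comp => //.
  exact: measurable_simil2.
- by move=> z; rewrite lee_fin sqr_ge0.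
transitivity (\int[gamma]_(z in unit_square R)
    (c ^+ 2 * u z ^+ 2 + 2 * c * e * u z + e ^+ 2)%:E).
  by apply: eq_integral => z _; congr EFin; rewrite /u /e /simil2 /simil /=; ring.
have ce_ge0 : (0 <= 2 * c * e)%R by rewrite !mulr_ge0 // (ltW c_gt0).
rewrite (ge0_integral_affine2 measurable_unit_square gamma1
  (measurable_funTS measurable_u2)
  (measurable_funTS measurable_u) (fun z _ => sqr_ge0 _) u_ge0
  (sqr_ge0 _) ce_ge0 (sqr_ge0 _)).
by rewrite integral_u integral_u2 -!EFinM -!EFinD.
Qed.

Let mean_eq : ((1 - c) * m1 = 1 - c + (p - q) * (t1 - t2))%R.
Proof.
have mh : measurable_fun setT (fun z => (`|u z|)%:E).
  by apply/measurable_EFinP; exact: measurableT_comp.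
have := ge0_integral_is_gamma r_ge0 pr_ge0 qr_ge0 pqr_ge0 gammaE mh
  (fun z => normr_ge0 _).
have [e11 e12 e21 e22] := branch_shifts_ge0.
rewrite !integral_u_simil2 //.
rewrite (integral_unit_square mh (fun z => normr_ge0 _)).
under eq_integral => z /[!inE] Qz do rewrite ger0_norm ?u_ge0 //.
rewrite integral_u -!EFinM -!EFinD => -[m1E].
by rewrite [in LHS]mulrBl {1}m1E; ring.
Qed.

Let second_moment_eq : ((1 - c ^+ 2) * m2 =
  2 * c * m1 * (1 - c + (p - q) * (t1 - t2)) + (1 - c) ^+ 2
  + 2 * (1 - c) * (p - q) * (t1 - t2) + (p + q - 2 * r) * (t2 - t1) ^+ 2)%R.
Proof.
have mh : measurable_fun setT (fun z => (u z ^+ 2)%:E).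
  exact/measurable_EFinP.
have := ge0_integral_is_gamma r_ge0 pr_ge0 qr_ge0 pqr_ge0 gammaE mh
  (fun z => sqr_ge0 _).
have [e11 e12 e21 e22] := branch_shifts_ge0.
rewrite !integral_u2_simil2 //.
rewrite (integral_unit_square mh (fun z => sqr_ge0 _)) integral_u2.
rewrite -!EFinM -!EFinD => -[m2E].
by rewrite [in LHS]mulrBl {1}m2E; ring.
Qed.

Let integral_diff_sqrE :
  (fine (\int[gamma]_(z in unit_square R) ((z.1 - z.2) ^+ 2)%:E) =
   m2 - 2 * m1 + 1)%R.
Proof.
have mG : measurable_fun setT (fun z : (R * R)%type => (z.1 - z.2) ^+ 2)%R.
  apply: measurable_funX; apply: measurable_funB.
  - exact: measurable_fst.
  - exact: measurable_snd.
have := bounded_integral_fineK measurable_unit_square gamma1 (measurable_funTS mG)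
  (fun z _ => sqr_ge0 _) (B := 1%R).
set v := fine _ => vE; rewrite /= in vE.
have {}vE : \int[gamma]_(z in unit_square R) ((z.1 - z.2) ^+ 2)%:E = v%:E.
  by apply: vE => z /unit_squareP[*]; nra.
have : \int[gamma]_(z in unit_square R) (1 * (z.1 - z.2) ^+ 2 + 2 * u z + 0)%:E =
       \int[gamma]_(z in unit_square R) (1 * u z ^+ 2 + 1)%:E.
  by apply: eq_integral => z _; congr EFin; rewrite /u; ring.
rewrite (ge0_integral_affine2 measurable_unit_square gamma1 (measurable_funTS mG)
  (measurable_funTS measurable_u) (fun z _ => sqr_ge0 _) u_ge0 ler01 (ler0n _ 2)
  (lexx 0)).
rewrite (ge0_integral_affine measurable_unit_square gamma1
  (measurable_funTS measurable_u2) (fun z _ => sqr_ge0 _) ler01 ler01).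
by rewrite vE integral_u integral_u2 -!EFinM -!EFinD => -[]; lra.
Qed.

Lemma is_gamma_integral_diff_sqr :
  (fine (\int[gamma]_(z in unit_square R) ((z.1 - z.2) ^+ 2)%:E) =
   ((t2 - t1) / (1 - c)) ^+ 2 *
   ((2 * c * (p - q) ^+ 2 + (1 - c) * (p + q - 2 * r)) / (1 + c)))%R.
Proof.
have c1_neq0 : (1 - c != 0)%R by rewrite gt_eqF // subr_gt0.
have c2_neq0 : (1 + c != 0)%R by rewrite gt_eqF // ltr_wpDr // (ltW c_gt0).
have cc_neq0 : (1 - c ^+ 2 != 0)%R.
  by rewrite gt_eqF // subr_gt0 expr2; move: c_gt0 c_lt1 => *; nra.
have m1E : m1 = ((1 - c + (p - q) * (t1 - t2)) / (1 - c))%R.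
  by rewrite -mean_eq [((1 - c) * m1)%R]mulrC mulfK.
have m2E : m2 = ((2 * c * m1 * (1 - c + (p - q) * (t1 - t2)) + (1 - c) ^+ 2
  + 2 * (1 - c) * (p - q) * (t1 - t2) + (p + q - 2 * r) * (t2 - t1) ^+ 2)
  / (1 - c ^+ 2))%R.
  by rewrite -second_moment_eq [((1 - c ^+ 2) * m2)%R]mulrC mulfK.
rewrite integral_diff_sqrE m2E m1E; field.
by rewrite c1_neq0 c2_neq0.
Qed.

End second_moment.

Theorem theorem2p3 (R : realType) (c t1 t2 p q r : R) (F : set R)
    (gamma : probability (R * R)%type R) :
  0 < c -> c <= 1 / 2 ->
  0 <= t1 -> t1 <= 1 - 2 * c ->
  t1 + c <= t2 -> t2 <= 1 - c ->
  0 < p < 1 -> 0 < q < 1 -> p != q ->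
  is_attractor c t1 t2 F ->
  Num.max 0 (p + q - 1) < r -> r < Num.min p q ->
  gamma (`[0, 1] `*` `[0, 1]) = 1%E ->
  is_gamma c t1 t2 p q r gamma ->
  Num.sqrt (fine (\int[gamma]_(z in F `*` F) ((z.1 - z.2) ^+ 2)%:E)) =
    (t2 - t1) / (1 - c) *
    Num.sqrt ((2 * c * (p - q) ^+ 2 + (1 - c) * (p + q - 2 * r)) / (1 + c)).
Proof.
move=> c_gt0 c_le t1_ge0 _ t1c_le t2_le _ _ _ attrF.
rewrite gt_max lt_min => /andP[r_gt0 r_gt] /andP[r_ltp r_ltq] gamma1 gammaE.
have c_lt1 : c < 1 by lra.
have [w1 w2 w3 w4] : [/\ 0 <= r, 0 <= p - r, 0 <= q - r & 0 <= 1 - p - q + r].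
  by split; lra.
have FF_null := is_gamma_attractor_null c_gt0 attrF c_lt1 w1 w2 w3 w4 gamma1 gammaE.
have mFF : measurable (F `*` F).
  have clF : closed F by apply: compact_closed; [exact: Rhausdorff | case: attrF].
  by apply: measurableX; exact: closed_measurable.
have mG : measurable_fun setT (fun z : (R * R)%type => ((z.1 - z.2) ^+ 2)%:E).
  apply/measurable_EFinP; apply: measurable_funX; apply: measurable_funB.
  - exact: measurable_fst.
  - exact: measurable_snd.
have G_ge0 (z : (R * R)%type) : (0 <= ((z.1 - z.2) ^+ 2)%:E)%E := sqr_ge0 _.
rewrite -(ge0_integral_setC_null mFF FF_null mG G_ge0).
rewrite (ge0_integral_setC_null measurable_unit_square
  (probability_unit_squareC gamma1) mG G_ge0).
rewrite (is_gamma_integral_diff_sqr c_gt0 c_lt1 _ _ w1 w2 w3 w4 gamma1 gammaE);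
  try lra.
rewrite sqrtrM ?sqr_ge0 // sqrtr_sqr ger0_norm //.
by rewrite divr_ge0 // subr_ge0; lra.
Qed.
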